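(* Let $n,p\ge1$ be integers, let $\mathbf{A}^{p+1}_{n+1}$ be as defined in the context, let $M=\max\{n+1,p\}$ and $s(x)=M.x^{M}$. Then $s(a)\vee\sim s(a)=\top$ for every $a\in A$, and $\mathrm{Rad}(\mathbf{A}^{p+1}_{n+1})=\{a\in A:s(a)=\top\}$. Consequently the identity $s(x)\vee\neg s(x)\approx\top$ holds in every algebra of the variety generated by $\mathbf{A}^{p+1}_{n+1}$.
   Context: Order $\mathbb{Z}\times\mathbb{Z}$ lexicographically: $(m,r)\preccurlyeq(k,s)$ iff $m<k$, or $m=k$ and $r\le s$; addition/subtraction of pairs is componentwise, and $\min,\max$ of pairs refer to $\preccurlyeq$. For an integer $n\ge1$ let $L^\omega_{n+1}=\{(m,r)\in\mathbb{Z}^2:(0,0)\preccurlyeq(m,r)\preccurlyeq(n,0)\}$ with $x\ast y=\max\{(0,0),x+y-(n,0)\}$ and $x\to y=\min\{(n,0),(n,0)-x+y\}$. For an integer $p\ge1$ let $L_{p+1}=\{0,1,\dots,p\}$ with $\alpha\ast\beta=\max\{0,\alpha+\beta-p\}$. Define $$A=A^{p+1}_{n+1}=\{\langle(m,r),\alpha\rangle:(m,r)\in L^\omega_{n+1},\ \alpha\in\{0,p\}\}\cup\{\langle(m,r),\alpha\rangle:(0,0)\preccurlyeq(m,r)\preccurlyeq(n-1,0),\ 0<\alpha<p\}.$$ Order: $\langle(m,r),\alpha\rangle\le\langle(k,s),\beta\rangle$ iff one of: (o1) $\alpha\neq0$, $\alpha\le\beta$ and $(m,r)\preccurlyeq(k,s)$;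 (o2) $\alpha=\beta=0$ and $(k,s)\preccurlyeq(m,r)$; (o3) $\alpha=0$, $\beta\ne0$ and $(n-1,0)\preccurlyeq(m+k,r+s)$. $\wedge,\vee$ denote meet and join for $\le$. Put $\bot=\langle(n,0),0\rangle$, $\top=\langle(n,0),p\rangle$. For $a=\langle(m,r),\alpha\rangle$, $b=\langle(k,s),\beta\rangle\in A$ define $a\odot b$ by: (P1) if $\alpha,\beta\ge1$ and $\alpha+\beta>p$: $a\odot b=\langle(m,r)\ast(k,s),\alpha+\beta-p\rangle$; (P2) if $\alpha,\beta\ge1$ and $\alpha+\beta\le p$: $a\odot b=\langle\min\{(n,0),(2n-(m+k+1),-(r+s))\},0\rangle$; (P3) if $\alpha\ge1$, $\beta=0$: $a\odot b=\langle(m,r)\to(k,s),0\rangle$, and if $\alpha=0$, $\beta\ge1$: $a\odot b=\langle(k,s)\to(m,r),0\rangle$; (P4) if $\alpha=\beta=0$: $a\odot b=\langle\min\{(n,0),(m+k+1,r+s)\},0\rangle$. Define $\sim\langle(m,r),\alpha\rangle=\langle(m,r),p-\alpha\rangle$ if $\alpha\in\{0,p\}$, and $\sim\langle(m,r),\alpha\rangle=\langle(n-1-m,-r),p-\alpha\rangle$ if $0<\alpha<p$. Define $a\Rightarrow b=\sim(a\odot\sim b)$ (so $\sim a=a\Rightarrow\bot$, interpreting $\neg x=x\to\bot$). The algebra $\mathbf{A}^{p+1}_{n+1}$ is $\langle A;\odot,\Rightarrow,\wedge,\vee,\bot,\top\rangle$, an algebra of type $(2,2,2,2,0,0)$ in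 the language $\langle\ast,\to,\wedge,\vee,\bot,\top\rangle$. Terms: $a^0=\top$, $a^{k+1}=a\odot a^k$; $a\oplus b=\sim(\sim a\odot\sim b)$; $0.a=\bot$, $(k+1).a=a\oplus k.a$. $\mathrm{Rad}$ is the intersection of all maximal proper implicative filters, where an implicative filter is a subset containing $\top$, closed under $\odot$ and upward closed. *)

From Stdlib Require Import ZArith Lia Bool ClassicalEpsilon.
Open Scope Z_scope.

Definition lexle (x y : Z * Z) : bool :=
  (fst x <? fst y) || ((fst x =? fst y) && (snd x <=? snd y)).
Definition lex (x y : Z * Z) : Prop := lexle x y = true.
Definition pmin (x y : Z * Z) : Z * Z := if lexle x y then x else y.
Definition pmax (x y : Z * Z) : Z * Z := if lexle x y then y else x.
Definition padd (x y : Z * Z) : Z * Z := (fst x + fst y, snd x + snd y).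
Definition psub (x y : Z * Z) : Z * Z := (fst x - fst y, snd x - snd y).

(* operations of L^omega_{n+1} *)
Definition pstar (n : Z) (x y : Z * Z) : Z * Z :=
  pmax (0, 0) (psub (padd x y) (n, 0)).
Definition parrow (n : Z) (x y : Z * Z) : Z * Z :=
  pmin (n, 0) (padd (psub (n, 0) x) y).

Record elt := mkE { epair : Z * Z; ealpha : Z }.

Definition inAb (n p : Z) (a : elt) : bool :=
  lexle (0, 0) (epair a) && lexle (epair a) (n, 0) &&
  ((ealpha a =? 0) || (ealpha a =? p) ||
   ((0 <? ealpha a) && (ealpha a <? p) && lexle (epair a) (n - 1, 0))).

Definition leE (n : Z) (a b : elt) : Prop :=
  (ealpha a <> 0 /\ ealpha a <= ealpha b /\ lex (epair a) (epair b))
  \/ (ealpha a = 0 /\ ealpha b = 0 /\ lex (epair b) (epair a))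
  \/ (ealpha a = 0 /\ ealpha b <> 0 /\ lex (n - 1, 0) (padd (epair a) (epair b))).

Definition odotE (n p : Z) (a b : elt) : elt :=
  let x := epair a in let y := epair b in
  let al := ealpha a in let be := ealpha b in
  if (1 <=? al) && (1 <=? be) then
    if p <? al + be then mkE (pstar n x y) (al + be - p)
    else mkE (pmin (n, 0) (2 * n - (fst x + fst y + 1), - (snd x + snd y))) 0
  else if (1 <=? al) && (be =? 0) then mkE (parrow n x y) 0
  else if (al =? 0) && (1 <=? be) then mkE (parrow n y x) 0
  else mkE (pmin (n, 0) (fst x + fst y + 1, snd x + snd y)) 0.

Definition negE (n p : Z) (a : elt) : elt :=
  if (ealpha a =? 0) || (ealpha a =? p) then mkE (epair a) (p - ealpha a)
  else mkE (n - 1 - fst (epair a), - snd (epair a)) (p - ealpha a).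

Definition impE (n p : Z) (a b : elt) : elt := negE n p (odotE n p a (negE n p b)).

Definition elt0 : elt := mkE (0, 0) 0.

Definition is_meet (n p : Z) (a b c : elt) : Prop :=
  inAb n p c = true /\ leE n c a /\ leE n c b /\
  forall d, inAb n p d = true -> leE n d a -> leE n d b -> leE n d c.
Definition is_join (n p : Z) (a b c : elt) : Prop :=
  inAb n p c = true /\ leE n a c /\ leE n b c /\
  forall d, inAb n p d = true -> leE n a d -> leE n b d -> leE n c d.
Definition meetE (n p : Z) (a b : elt) : elt :=
  epsilon (inhabits elt0) (is_meet n p a b).
Definition joinE (n p : Z) (a b : elt) : elt :=
  epsilon (inhabits elt0) (is_join n p a b).

Definition Acar (n p : Z) : Type := {a : elt | inAb n p a = true}.

(* lifting a binary operation to A; the fallback branch is never used, since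
   A is closed under all operations (this is part of what is to be proved). *)
Definition lift2 (n p : Z) (f : elt -> elt -> elt) (a b : Acar n p) : Acar n p :=
  match sumbool_of_bool (inAb n p (f (proj1_sig a) (proj1_sig b))) with
  | left H => exist _ _ H
  | right _ => a
  end.

Lemma bot_in (n p : Z) (hn : 1 <= n) : inAb n p (mkE (n, 0) 0) = true.
Proof.
  unfold inAb, lexle; simpl.
  replace (0 <? n) with true by (symmetry; apply Z.ltb_lt; lia).
  rewrite !Z.eqb_refl, !Z.leb_refl, !orb_true_r; reflexivity.
Qed.

Lemma top_in (n p : Z) (hn : 1 <= n) : inAb n p (mkE (n, 0) p) = true.
Proof.
  unfold inAb, lexle; simpl.
  replace (0 <? n) with true by (symmetry; apply Z.ltb_lt; lia).
  rewrite !Z.eqb_refl, !Z.leb_refl, !orb_true_r; reflexivity.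
Qed.

Definition botA (n p : Z) (hn : 1 <= n) : Acar n p := exist _ _ (bot_in n p hn).
Definition topA (n p : Z) (hn : 1 <= n) : Acar n p := exist _ _ (top_in n p hn).

Definition leA (n p : Z) (a b : Acar n p) : Prop := leE n (proj1_sig a) (proj1_sig b).

Record alg := Alg {
  car :> Type;
  amul : car -> car -> car;
  aimp : car -> car -> car;
  ameet : car -> car -> car;
  ajoin : car -> car -> car;
  abot : car;
  atop : car }.

Definition Aalg (n p : Z) (hn : 1 <= n) : alg :=
  Alg (Acar n p) (lift2 n p (odotE n p)) (lift2 n p (impE n p))
      (lift2 n p (meetE n p)) (lift2 n p (joinE n p)) (botA n p hn) (topA n p hn).

Definition aneg (B : alg) (x : B) : B := aimp B x (abot B).
Definition aoplus (B : alg) (x y : B) : B :=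
  aneg B (amul B (aneg B x) (aneg B y)).
Fixpoint apow (B : alg) (x : B) (k : nat) : B :=
  match k with O => atop B | S k' => amul B x (apow B x k') end.
Fixpoint atimes (B : alg) (k : nat) (x : B) : B :=
  match k with O => abot B | S k' => aoplus B x (atimes B k' x) end.
Definition sfun (B : alg) (M : nat) (x : B) : B := atimes B M (apow B x M).

Definition impl_filter (n p : Z) (hn : 1 <= n) (F : Acar n p -> Prop) : Prop :=
  F (topA n p hn) /\
  (forall x y, F x -> F y -> F (amul (Aalg n p hn) x y)) /\
  (forall x y, F x -> leA n p x y -> F y).
Definition proper_filter (n p : Z) (hn : 1 <= n) (F : Acar n p -> Prop) : Prop :=
  impl_filter n p hn F /\ exists x, ~ F x.
Definition maximal_filter (n p : Z) (hn : 1 <= n) (F : Acar n p -> Prop) : Prop :=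
  proper_filter n p hn F /\
  forall G, proper_filter n p hn G -> (forall x, F x -> G x) -> forall x, G x -> F x.
Definition Rad (n p : Z) (hn : 1 <= n) (a : Acar n p) : Prop :=
  forall F, maximal_filter n p hn F -> F a.

Definition in_variety (A B : alg) : Prop :=
  exists (I : Type) (S : (I -> car A) -> Prop) (h : (I -> car A) -> car B),
    (forall f g, S f -> S g -> S (fun i => amul A (f i) (g i))) /\
    (forall f g, S f -> S g -> S (fun i => aimp A (f i) (g i))) /\
    (forall f g, S f -> S g -> S (fun i => ameet A (f i) (g i))) /\
    (forall f g, S f -> S g -> S (fun i => ajoin A (f i) (g i))) /\
    S (fun _ => abot A) /\ S (fun _ => atop A) /\
    (forall y : car B, exists f, S f /\ h f = y) /\
    (forall f g, S f -> S g -> h (fun i => amul A (f i) (g i)) = amul B (h f) (h g)) /\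
    (forall f g, S f -> S g -> h (fun i => aimp A (f i) (g i)) = aimp B (h f) (h g)) /\
    (forall f g, S f -> S g -> h (fun i => ameet A (f i) (g i)) = ameet B (h f) (h g)) /\
    (forall f g, S f -> S g -> h (fun i => ajoin A (f i) (g i)) = ajoin B (h f) (h g)) /\
    h (fun _ => abot A) = abot B /\ h (fun _ => atop A) = atop B.

(* An element [<(m,r),al>] with [al = p] lies on the chain [L^omega_{n+1} x {p}], which is
   closed under the product; on it [x (+) y] adds one step to the sum of the pairs, so [M.x]
   reaches [T] as soon as [M >= n + 1].  If [al < p], each further factor of [a^K] lowers the
   label by at least one until it is [0], and from then on raises the pair by at least one
   step; hence [a^M = _|_] once [M >= max(n+1, p)], and then [s(a) = _|_].  So [s] only takes
   the values [T] and [_|_], which gives [s(a) v ~s(a) = T].  The same computation shows that a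
   proper implicative filter cannot leave the chain (it would contain [a^M = _|_]); the chain
   being itself a filter, it is the unique maximal one, i.e. the radical, and it equals
   [{a | s(a) = T}].  Finally [s(x) v ~s(x) = T] is an identity, hence it is inherited by
   subalgebras of powers and their homomorphic images. *)

From Stdlib Require Import ZArith Lia Bool ClassicalEpsilon Eqdep_dec FunctionalExtensionality.
Open Scope Z_scope.

Lemma lexle_true a b c d : lexle (a, b) (c, d) = true <-> a < c \/ a = c /\ b <= d.
Proof.
  unfold lexle; simpl. rewrite orb_true_iff, andb_true_iff, Z.ltb_lt, Z.eqb_eq, Z.leb_le. tauto.
Qed.

Lemma lexle_false a b c d : lexle (a, b) (c, d) = false <-> c < a \/ a = c /\ d < b.
Proof.
  rewrite <- not_true_iff_false, lexle_true. lia.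
Qed.

Definition lex_ge (k s c : Z) : Prop := c < k \/ c = k /\ 0 <= s.
Definition lex_le (k s c : Z) : Prop := k < c \/ k = c /\ s <= 0.

Definition inL (n m r : Z) : Prop := lex_ge m r 0 /\ lex_le m r n.

Definition inA (n p m r al : Z) : Prop :=
  inL n m r /\ (al = 0 \/ al = p \/ 0 < al < p /\ lex_le m r (n - 1)).

Ltac arith := unfold inA, inL, lex_ge, lex_le in *; lia.

Lemma inAb_iff n p m r al : 1 <= p -> inAb n p (mkE (m, r) al) = true <-> inA n p m r al.
Proof.
  intro hp. unfold inAb; simpl.
  rewrite !andb_true_iff, !orb_true_iff, !andb_true_iff, !lexle_true, !Z.eqb_eq, !Z.ltb_lt.
  arith.
Qed.

Ltac split_cases := repeat (match goal with
  | |- context [lexle (?a, ?b) (?c, ?d)] =>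
      let E := fresh "E" in
      destruct (lexle (a, b) (c, d)) eqn:E; [apply lexle_true in E | apply lexle_false in E]
  | |- context [?a <? ?b] => destruct (Z.ltb_spec a b)
  | |- context [?a =? ?b] => destruct (Z.eqb_spec a b)
  | |- context [?a <=? ?b] => destruct (Z.leb_spec a b)
  end; try (exfalso; lia); cbn [fst snd andb orb negb epair ealpha] in * ).

Ltac unfold_ops :=
  unfold impE, negE, odotE, pstar, parrow, pmin, pmax, padd, psub; cbn [fst snd epair ealpha].

Section Closure.

Variables n p : Z.
Hypotheses (hn : 1 <= n) (hp : 1 <= p).

Lemma odotE_closed a b :
  inAb n p a = true -> inAb n p b = true -> inAb n p (odotE n p a b) = true.
Proof.
  destruct a as [[m r] al], b as [[k s] be].
  rewrite !inAb_iff by exact hp. intros [[La Ua] Ca] [[Lb Ub] Cb].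
  unfold_ops.
  destruct Ca as [->|[->|[? Ca]]]; destruct Cb as [->|[->|[? Cb]]];
    split_cases; apply inAb_iff; auto; arith.
Qed.

Lemma negE_closed a : inAb n p a = true -> inAb n p (negE n p a) = true.
Proof.
  destruct a as [[m r] al]. rewrite inAb_iff by exact hp. intros [[La Ua] Ca].
  unfold_ops. destruct Ca as [->|[->|[? Ca]]]; split_cases; apply inAb_iff; auto; arith.
Qed.

Lemma impE_closed a b :
  inAb n p a = true -> inAb n p b = true -> inAb n p (impE n p a b) = true.
Proof.
  intros Ha Hb. apply negE_closed, odotE_closed, negE_closed; assumption.
Qed.

End Closure.

Definition eneg (n p : Z) (x : elt) : elt := impE n p x (mkE (n, 0) 0).
Definition eoplus (n p : Z) (x y : elt) : elt := eneg n p (odotE n p (eneg n p x) (eneg n p y)).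
Fixpoint epow (n p : Z) (x : elt) (k : nat) : elt :=
  match k with O => mkE (n, 0) p | S k => odotE n p x (epow n p x k) end.
Fixpoint etimes (n p : Z) (k : nat) (x : elt) : elt :=
  match k with O => mkE (n, 0) 0 | S k => eoplus n p x (etimes n p k x) end.

Lemma mkE_eq a b c d e f : a = d -> b = e -> c = f -> mkE (a, b) c = mkE (d, e) f.
Proof. intros -> -> ->. reflexivity. Qed.

Section TermFunctions.

Variables n p : Z.
Hypotheses (hn : 1 <= n) (hp : 1 <= p).

Lemma odotE_top_r m r al : inA n p m r al ->
  odotE n p (mkE (m, r) al) (mkE (n, 0) p) = mkE (m, r) al.
Proof.
  intros [[L U] C]. unfold_ops.
  destruct C as [->|[->|[? C]]]; split_cases; apply mkE_eq; arith.
Qed.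

Lemma eneg_negE m r al : inA n p m r al -> eneg n p (mkE (m, r) al) = negE n p (mkE (m, r) al).
Proof.
  intro H. unfold eneg, impE. f_equal.
  replace (negE n p (mkE (n, 0) 0)) with (mkE (n, 0) p) by (unfold negE; simpl; f_equal; lia).
  apply odotE_top_r; exact H.
Qed.

Lemma eneg_alpha_p m r : inL n m r -> eneg n p (mkE (m, r) p) = mkE (m, r) 0.
Proof.
  intro H. rewrite eneg_negE by arith. unfold negE; cbn [ealpha epair fst snd].
  rewrite Z.eqb_refl, orb_true_r. apply mkE_eq; lia.
Qed.

Lemma eneg_alpha_0 m r : inL n m r -> eneg n p (mkE (m, r) 0) = mkE (m, r) p.
Proof.
  intro H. rewrite eneg_negE by arith. unfold negE; cbn [ealpha epair fst snd].
  apply mkE_eq; lia.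
Qed.

Lemma eoplus_alpha_p m r k s : inL n m r -> inL n k s ->
  eoplus n p (mkE (m, r) p) (mkE (k, s) p) = mkE (pmin (n, 0) (m + k + 1, r + s)) p.
Proof.
  intros H1 H2. unfold eoplus. rewrite !eneg_alpha_p by assumption.
  change (odotE n p (mkE (m, r) 0) (mkE (k, s) 0)) with (mkE (pmin (n, 0) (m + k + 1, r + s)) 0).
  unfold pmin; split_cases; rewrite eneg_alpha_0; auto; arith.
Qed.

Lemma etimes_alpha_p m r : inL n m r -> forall j : nat,
  exists k s, etimes n p (S j) (mkE (m, r) p) = mkE (k, s) p /\ inL n k s /\
              lex_ge k s (Z.min n (Z.of_nat j)).
Proof.
  intros H j. induction j as [|j [k [s [E [Hks Hge]]]]].
  - exists m, r. split; [|arith].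
    unfold etimes, eoplus. rewrite eneg_alpha_p, (eneg_alpha_0 n 0), odotE_top_r, eneg_alpha_0;
      auto; arith.
  - change (etimes n p (S (S j)) (mkE (m, r) p))
      with (eoplus n p (mkE (m, r) p) (etimes n p (S j) (mkE (m, r) p))).
    rewrite E, eoplus_alpha_p by assumption.
    unfold pmin; split_cases; do 2 eexists; (split; [reflexivity | arith]).
Qed.

Lemma etimes_alpha_p_top m r (M : nat) : inL n m r -> n + 1 <= Z.of_nat M ->
  etimes n p M (mkE (m, r) p) = mkE (n, 0) p.
Proof.
  intros H HM. destruct M as [|j]; [lia|].
  destruct (etimes_alpha_p m r H j) as [k [s [-> [Hks Hge]]]]. apply mkE_eq; arith.
Qed.

Lemma odotE_alpha_p m r k s : inL n m r -> inL n k s ->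
  exists m' r', odotE n p (mkE (m, r) p) (mkE (k, s) p) = mkE (m', r') p /\ inL n m' r'.
Proof.
  intros H1 H2. unfold_ops; split_cases;
    do 2 eexists; (split; [apply mkE_eq; [reflexivity | reflexivity | lia] | arith]).
Qed.

Lemma epow_alpha_p m r : inL n m r -> forall k : nat,
  exists m' r', epow n p (mkE (m, r) p) k = mkE (m', r') p /\ inL n m' r'.
Proof.
  intros H k. induction k as [|k [m' [r' [E H']]]].
  - exists n, 0. split; [reflexivity | arith].
  - simpl epow. rewrite E. apply odotE_alpha_p; assumption.
Qed.

(* Invariant of [a^K] for a label [al < p]: either the label is positive and at most [p - K]
   and the pair is below [(n - K, 0)], or the label is [0] and the pair is above [(K - 1, 0)]. *)
Definition pow_stage (K : Z) (e : elt) : Prop :=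
  (exists y1 y2 b, e = mkE (y1, y2) b /\ 1 <= b <= p - K /\ inL (Z.max 0 (n - K)) y1 y2)
  \/ (exists z1 z2, e = mkE (z1, z2) 0 /\ lex_ge z1 z2 (Z.min n (K - 1)) /\ lex_le z1 z2 n).

Ltac pow_stage_witness :=
  first [ right; do 2 eexists; split; [apply mkE_eq; reflexivity | arith]
        | left; do 3 eexists; split; [apply mkE_eq; reflexivity | arith] ].

Lemma pow_stage_step m r al K e : inA n p m r al -> al < p -> 1 <= K ->
  pow_stage K e -> pow_stage (K + 1) (odotE n p (mkE (m, r) al) e).
Proof.
  intros [[L U] C] Hal HK [[y1 [y2 [b [-> Hb]]]] | [z1 [z2 [-> Hz]]]];
    unfold pow_stage; unfold_ops;
    (destruct C as [->|[->|[? C]]]; [| lia |]); split_cases; pow_stage_witness.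
Qed.

Lemma epow_pow_stage m r al : inA n p m r al -> al < p -> forall k : nat,
  pow_stage (Z.of_nat (S k)) (epow n p (mkE (m, r) al) (S k)).
Proof.
  intros H Hal k. induction k as [|k IH].
  - simpl epow. rewrite odotE_top_r by exact H.
    unfold pow_stage. destruct H as [HL [->|[->|[? C]]]]; [| lia |]; pow_stage_witness.
  - change (epow n p (mkE (m, r) al) (S (S k)))
      with (odotE n p (mkE (m, r) al) (epow n p (mkE (m, r) al) (S k))).
    replace (Z.of_nat (S (S k))) with (Z.of_nat (S k) + 1) by lia.
    apply pow_stage_step; auto; lia.
Qed.

Lemma epow_alpha_lt_p m r al (M : nat) : inA n p m r al -> al < p ->
  n + 1 <= Z.of_nat M -> p <= Z.of_nat M -> epow n p (mkE (m, r) al) M = mkE (n, 0) 0.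
Proof.
  intros H Hal H1 H2. destruct M as [|k]; [lia|].
  destruct (epow_pow_stage m r al H Hal k) as [[y1 [y2 [b [_ Hb]]]] | [z1 [z2 [-> Hz]]]].
  - lia.
  - apply mkE_eq; arith.
Qed.

Lemma etimes_bot k : etimes n p k (mkE (n, 0) 0) = mkE (n, 0) 0.
Proof.
  induction k as [|k IH]; [reflexivity|].
  simpl etimes. rewrite IH. unfold eoplus.
  rewrite eneg_alpha_0, odotE_top_r, eneg_alpha_p; auto; arith.
Qed.

End TermFunctions.

Section Algebra.

Variables n p : Z.
Hypotheses (hn : 1 <= n) (hp : 1 <= p).

Local Notation A := (Aalg n p hn).
Local Notation top := (topA n p hn).
Local Notation bot := (botA n p hn).

Lemma Acar_eq (a b : Acar n p) : proj1_sig a = proj1_sig b -> a = b.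
Proof.
  destruct a as [a Ha], b as [b Hb]; simpl; intros ->. f_equal. apply UIP_dec, bool_dec.
Qed.

Lemma lift2_val f (a b : Acar n p) : inAb n p (f (proj1_sig a) (proj1_sig b)) = true ->
  proj1_sig (lift2 n p f a b) = f (proj1_sig a) (proj1_sig b).
Proof.
  intro H. unfold lift2. destruct (sumbool_of_bool _) as [e|e]; [reflexivity | congruence].
Qed.

Lemma amul_val (a b : Acar n p) : proj1_sig (amul A a b) = odotE n p (proj1_sig a) (proj1_sig b).
Proof. apply lift2_val, odotE_closed; auto; apply proj2_sig. Qed.

Lemma aimp_val (a b : Acar n p) : proj1_sig (aimp A a b) = impE n p (proj1_sig a) (proj1_sig b).
Proof. apply lift2_val, impE_closed; auto; apply proj2_sig. Qed.

Lemma aneg_val (a : Acar n p) : proj1_sig (aneg A a) = eneg n p (proj1_sig a).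
Proof. apply aimp_val. Qed.

Lemma aoplus_val (a b : Acar n p) :
  proj1_sig (aoplus A a b) = eoplus n p (proj1_sig a) (proj1_sig b).
Proof. unfold aoplus. rewrite aneg_val, amul_val, !aneg_val. reflexivity. Qed.

Lemma apow_val (a : Acar n p) k : proj1_sig (apow A a k) = epow n p (proj1_sig a) k.
Proof.
  induction k as [|k IH]; [reflexivity|].
  cbn [apow]. rewrite amul_val, IH. reflexivity.
Qed.

Lemma atimes_val (a : Acar n p) k : proj1_sig (atimes A k a) = etimes n p k (proj1_sig a).
Proof.
  induction k as [|k IH]; [reflexivity|].
  cbn [atimes]. rewrite aoplus_val, IH. reflexivity.
Qed.

(* The chain [L^omega_{n+1} x {p}]; it will turn out to be the unique maximal filter. *)
Definition chain_p (a : A) : Prop := ealpha (proj1_sig a) = p.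

Lemma sfun_chain_p (M : nat) (a : A) : n + 1 <= Z.of_nat M -> chain_p a -> sfun A M a = top.
Proof.
  destruct a as [[[m r] al] Ha]; unfold chain_p; simpl; intros HM ->.
  pose proof (proj1 (inAb_iff _ _ _ _ _ hp) Ha) as Hin.
  apply Acar_eq. unfold sfun. rewrite atimes_val, apow_val; simpl.
  destruct (epow_alpha_p n p hn hp m r ltac:(arith) M) as [m' [r' [-> H']]].
  apply etimes_alpha_p_top; assumption.
Qed.

Lemma apow_not_chain_p (M : nat) (a : A) : n + 1 <= Z.of_nat M -> p <= Z.of_nat M ->
  ~ chain_p a -> apow A a M = bot.
Proof.
  destruct a as [[[m r] al] Ha]; unfold chain_p; simpl; intros HMn HMp Hal.
  pose proof (proj1 (inAb_iff _ _ _ _ _ hp) Ha) as Hin.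
  apply Acar_eq. rewrite apow_val; simpl.
  apply epow_alpha_lt_p; auto; arith.
Qed.

Lemma sfun_not_chain_p (M : nat) (a : A) : n + 1 <= Z.of_nat M -> p <= Z.of_nat M ->
  ~ chain_p a -> sfun A M a = bot.
Proof.
  intros HMn HMp H. unfold sfun. rewrite apow_not_chain_p by assumption.
  apply Acar_eq. rewrite atimes_val. apply etimes_bot; assumption.
Qed.

Lemma leE_bot d : inAb n p d = true -> leE n (mkE (n, 0) 0) d.
Proof.
  destruct d as [[k s] be]. rewrite inAb_iff by exact hp. intro Hd.
  unfold leE, lex, padd; cbn [epair ealpha fst snd]. rewrite !lexle_true.
  destruct (Z.eq_dec be 0); arith.
Qed.

Lemma leE_top c : inAb n p c = true -> leE n c (mkE (n, 0) p).
Proof.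
  destruct c as [[k s] be]. rewrite inAb_iff by exact hp. intro Hc.
  unfold leE, lex, padd; cbn [epair ealpha fst snd]. rewrite !lexle_true.
  destruct (Z.eq_dec be 0); arith.
Qed.

Lemma leE_top_inv c : inAb n p c = true -> leE n (mkE (n, 0) p) c -> c = mkE (n, 0) p.
Proof.
  destruct c as [[k s] be]. rewrite inAb_iff by exact hp.
  unfold leE, lex, padd; cbn [epair ealpha fst snd]. rewrite !lexle_true.
  intros Hc H. apply mkE_eq; arith.
Qed.

Lemma ajoin_top (a b : A) : a = top \/ b = top -> ajoin A a b = top.
Proof.
  (* [T] is a join of [a] and [b], so the join chosen by [epsilon] lies above [T]. *)
  intro Hab.
  assert (Hj : is_join n p (proj1_sig a) (proj1_sig b) (mkE (n, 0) p)).
  { split; [apply top_in; exact hn|].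
    split; [apply leE_top, proj2_sig|]. split; [apply leE_top, proj2_sig|].
    intros d _ Ha Hb. destruct Hab as [-> | ->]; assumption. }
  destruct (epsilon_spec (inhabits elt0) _ (ex_intro _ _ Hj)) as [Hin [Ha [Hb _]]].
  apply Acar_eq. cbn [ajoin Aalg]. rewrite lift2_val by exact Hin.
  apply leE_top_inv; [exact Hin|]. destruct Hab as [-> | ->]; assumption.
Qed.

Lemma aneg_bot : aneg A bot = top.
Proof. apply Acar_eq. rewrite aneg_val. apply eneg_alpha_0; arith. Qed.

Lemma sfun_excluded_middle (M : nat) (a : A) : n + 1 <= Z.of_nat M -> p <= Z.of_nat M ->
  ajoin A (sfun A M a) (aneg A (sfun A M a)) = top.
Proof.
  intros HMn HMp. apply ajoin_top.
  destruct (Z.eq_dec (ealpha (proj1_sig a)) p) as [H|H].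
  - left. apply sfun_chain_p; assumption.
  - right. rewrite sfun_not_chain_p by assumption. apply aneg_bot.
Qed.

Lemma chain_p_filter : impl_filter n p hn chain_p.
Proof.
  split; [reflexivity|]. split.
  - intros [[[m r] al] Hx] [[[k s] be] Hy]. unfold chain_p. rewrite amul_val; simpl. intros -> ->.
    rewrite inAb_iff in Hx, Hy by exact hp.
    destruct (odotE_alpha_p n p hn hp m r k s) as [m' [r' [-> _]]]; [arith | arith | reflexivity].
  - intros [[[m r] al] Hx] [[[k s] be] Hy]. unfold chain_p, leA, leE; simpl. intros ->.
    rewrite inAb_iff in Hy by exact hp. arith.
Qed.

Lemma filter_apow F : impl_filter n p hn F -> forall (x : A) k, F x -> F (apow A x k).
Proof.
  intros [Ftop [Fmul _]] x k Fx. induction k as [|k IH]; [exact Ftop|]. apply Fmul; assumption.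
Qed.

Lemma proper_filter_chain_p F : proper_filter n p hn F -> forall x, F x -> chain_p x.
Proof.
  intros [HF [z Hz]] x Fx.
  destruct (Z.eq_dec (ealpha (proj1_sig x)) p) as [H|H]; [exact H|].
  exfalso. apply Hz. apply (proj2 (proj2 HF) bot z).
  - rewrite <- (apow_not_chain_p (Z.to_nat (Z.max (n + 1) p)) x) by (assumption || lia).
    apply filter_apow; assumption.
  - apply leE_bot, proj2_sig.
Qed.

Lemma chain_p_maximal : maximal_filter n p hn chain_p.
Proof.
  split.
  - split; [exact chain_p_filter|]. exists bot. unfold chain_p; simpl. lia.
  - intros G HG _. exact (proper_filter_chain_p G HG).
Qed.

Lemma Rad_chain_p (a : A) : Rad n p hn a <-> chain_p a.
Proof.
  split.
  - intro H. exact (H _ chain_p_maximal).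
  - intros Ha F [HF Fmax].
    exact (Fmax chain_p (proj1 chain_p_maximal) (proper_filter_chain_p F HF) a Ha).
Qed.

Lemma Rad_sfun (M : nat) (a : A) : n + 1 <= Z.of_nat M -> p <= Z.of_nat M ->
  Rad n p hn a <-> sfun A M a = top.
Proof.
  intros HMn HMp. rewrite Rad_chain_p. split; [apply sfun_chain_p; assumption|].
  intro E. destruct (Z.eq_dec (ealpha (proj1_sig a)) p) as [H|H]; [exact H|].
  rewrite sfun_not_chain_p in E by assumption.
  apply (f_equal (fun x => ealpha (proj1_sig x))) in E. simpl in E. lia.
Qed.

End Algebra.

Section SubpowerHomomorphism.

Variables (A B : alg) (I : Type) (S : (I -> car A) -> Prop) (h : (I -> car A) -> car B).
Hypotheses
  (Smul : forall f g, S f -> S g -> S (fun i => amul A (f i) (g i)))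
  (Simp : forall f g, S f -> S g -> S (fun i => aimp A (f i) (g i)))
  (Sbot : S (fun _ => abot A)) (Stop : S (fun _ => atop A))
  (hmul : forall f g, S f -> S g -> h (fun i => amul A (f i) (g i)) = amul B (h f) (h g))
  (himp : forall f g, S f -> S g -> h (fun i => aimp A (f i) (g i)) = aimp B (h f) (h g))
  (hbot : h (fun _ => abot A) = abot B) (htop : h (fun _ => atop A) = atop B).

Lemma hom_aneg f : S f ->
  S (fun i => aneg A (f i)) /\ h (fun i => aneg A (f i)) = aneg B (h f).
Proof.
  intro Hf. unfold aneg. split.
  - exact (Simp f _ Hf Sbot).
  - rewrite (himp f _ Hf Sbot), hbot. reflexivity.
Qed.

Lemma hom_aoplus f g : S f -> S g ->
  S (fun i => aoplus A (f i) (g i)) /\ h (fun i => aoplus A (f i) (g i)) = aoplus B (h f) (h g).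
Proof.
  intros Hf Hg. unfold aoplus.
  destruct (hom_aneg f Hf) as [Sf Ef], (hom_aneg g Hg) as [Sg Eg].
  destruct (hom_aneg _ (Smul _ _ Sf Sg)) as [Sfg Efg].
  split; [exact Sfg|]. cbn beta in Efg. rewrite Efg, hmul, Ef, Eg by assumption. reflexivity.
Qed.

Lemma hom_apow f k : S f ->
  S (fun i => apow A (f i) k) /\ h (fun i => apow A (f i) k) = apow B (h f) k.
Proof.
  intro Hf. induction k as [|k [Sk Ek]]; [split; assumption|].
  cbn [apow]. split; [exact (Smul _ _ Hf Sk)|]. rewrite hmul, Ek by assumption. reflexivity.
Qed.

Lemma hom_atimes k f : S f ->
  S (fun i => atimes A k (f i)) /\ h (fun i => atimes A k (f i)) = atimes B k (h f).
Proof.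
  intro Hf. induction k as [|k [Sk Ek]]; [split; assumption|].
  cbn [atimes]. destruct (hom_aoplus _ _ Hf Sk) as [S' E'].
  split; [exact S'|]. rewrite E', Ek. reflexivity.
Qed.

Lemma hom_sfun M f : S f ->
  S (fun i => sfun A M (f i)) /\ h (fun i => sfun A M (f i)) = sfun B M (h f).
Proof.
  intro Hf. unfold sfun. destruct (hom_apow f M Hf) as [Sp Ep].
  destruct (hom_atimes M _ Sp) as [St Et]. cbn beta in St, Et.
  rewrite Ep in Et. split; assumption.
Qed.

End SubpowerHomomorphism.

Lemma sfun_excluded_middle_variety (A B : alg) (M : nat) :
  (forall a : car A, ajoin A (sfun A M a) (aneg A (sfun A M a)) = atop A) ->
  in_variety A B -> forall x : car B, ajoin B (sfun B M x) (aneg B (sfun B M x)) = atop B.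
Proof.
  intros HA [I [S [h [Smul [Simp [_ [_ [Sbot [Stop
              [Hsurj [hmul [himp [_ [hjoin [hbot htop]]]]]]]]]]]]]]] x.
  destruct (Hsurj x) as [f [Hf <-]].
  destruct (hom_sfun A B I S h Smul Simp Sbot Stop hmul himp hbot htop M f Hf) as [Ss Es].
  destruct (hom_aneg A B I S h Simp Sbot himp hbot _ Ss) as [Sn En].
  rewrite <- Es, <- En, <- hjoin, <- htop by assumption.
  f_equal. apply functional_extensionality. intro i. apply HA.
Qed.

Theorem corollary3p7 (n p : Z) (hn : 1 <= n) (hp : 1 <= p) :
  let A := Aalg n p hn in
  let M := Z.to_nat (Z.max (n + 1) p) in
  (forall a : car A, ajoin A (sfun A M a) (aneg A (sfun A M a)) = atop A) /\
  (forall a : car A, Rad n p hn a <-> sfun A M a = atop A) /\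
  (forall B : alg, in_variety A B ->
     forall x : car B, ajoin B (sfun B M x) (aneg B (sfun B M x)) = atop B).
Proof.
  intros A M.
  assert (HMn : n + 1 <= Z.of_nat M) by (unfold M; lia).
  assert (HMp : p <= Z.of_nat M) by (unfold M; lia).
  assert (Hexcl : forall a : car A, ajoin A (sfun A M a) (aneg A (sfun A M a)) = atop A)
    by (intro a; apply sfun_excluded_middle; assumption).
  split; [exact Hexcl|]. split.
  - intro a. apply Rad_sfun; assumption.
  - intros B HB. exact (sfun_excluded_middle_variety A B M Hexcl HB).
Qed.
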